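(* Let $n\ge1$, let $V$ be a finite set of values, let $\psi_{iv}\in\mathbb{R}$ ($1\le i\le n$, $v\in V$), let $W=(w_{vv'})$ be a real $|V|\times|V|$ matrix, fix $\alpha\in V$ and an integer $k$. Consider the integer program $$\max_{z}\ \sum_{i,v}(\psi_{iv}+w_{\alpha v})z_{iv}\quad\text{s.t.}\quad \sum_i z_{iv}\le k\ \ (\forall v\ne\alpha),\quad \sum_i z_{i\alpha}=k,\quad \sum_v z_{iv}=1\ \ (\forall i),\quad z_{iv}\in\{0,1\}.$$ Its LP relaxation (replacing $z_{iv}\in\{0,1\}$ by $0\le z_{iv}\le 1$) is tight, i.e. it has an integral optimal solution, so its optimal value equals that of the integer program. *)

From HB Require Import structures.
From mathcomp Require Import all_boot all_order all_algebra.
From mathcomp Require Export reals.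
Set Implicit Arguments. Unset Strict Implicit. Unset Printing Implicit Defensive.
Import Order.TTheory GRing.Theory Num.Theory.
Local Open Scope ring_scope.

Definition lp_objective (R : realType) (n : nat) (V : finType)
  (psi : 'I_n -> V -> R) (w : V -> V -> R) (alpha : V) (z : 'I_n -> V -> R) : R :=
  \sum_(i < n) \sum_(v : V) (psi i v + w alpha v) * z i v.

Definition lp_feasible (R : realType) (n : nat) (V : finType)
  (alpha : V) (k : int) (z : 'I_n -> V -> R) : Prop :=
  [/\ forall v : V, v != alpha -> \sum_(i < n) z i v <= k%:~R,
      \sum_(i < n) z i alpha = k%:~R,
      forall i : 'I_n, \sum_(v : V) z i v = 1
    & forall (i : 'I_n) (v : V), 0 <= z i v <= 1].

Definition integral_sol (R : realType) (n : nat) (V : finType)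
  (z : 'I_n -> V -> R) : Prop :=
  forall (i : 'I_n) (v : V), z i v = 0 \/ z i v = 1.

Definition lp_optimal (R : realType) (n : nat) (V : finType)
  (psi : 'I_n -> V -> R) (w : V -> V -> R) (alpha : V) (k : int)
  (z : 'I_n -> V -> R) : Prop :=
  lp_feasible alpha k z /\
  forall z' : 'I_n -> V -> R, lp_feasible alpha k z' ->
    lp_objective psi w alpha z' <= lp_objective psi w alpha z.

From mathcomp Require Import all_boot all_order all_algebra.
From mathcomp Require Import reals boolp zify lra.
Set Implicit Arguments. Unset Strict Implicit. Unset Printing Implicit Defensive.
Import Order.TTheory GRing.Theory Num.Theory.
Local Open Scope ring_scope.

(* Iterative rounding.  Let F be the set of fractional entries of a feasible
   point z.  Every row, and every column with integral sum, contains either no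
   entry of F or at least two; double counting then shows that the homogeneous
   system "all row sums vanish, all integral column sums vanish" on the entries
   of F has fewer independent equations than unknowns (if every entry of F lies
   in an integral column, one column equation is implied by the others), so it
   has a nonzero solution d.  Moving z along d or -d, whichever does not
   decrease the objective, until an entry reaches 0 or 1 or a fractional column
   sum reaches its ceiling keeps z feasible and strictly decreases the number of
   fractional entries plus fractional column sums.  So every feasible point is
   dominated by an integral one, and the best of the finitely many integral
   feasible points is an LP optimum. *)

Definition fractional (R : numDomainType) (x : R) := (0 < x) && (x < 1).

Lemma int_not_fractional (R : archiNumDomainType) (x : R) :
  x \is a Num.int -> ~~ fractional x.
Proof. by move=> /intrP[m ->]; rewrite /fractional ltr0z ltrz1; lia. Qed.

Lemma unit_interval_nonfractional (R : realDomainType) (x : R) :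
  0 <= x <= 1 -> ~~ fractional x -> x = 0 \/ x = 1.
Proof.
move=> /andP[x_ge0 x_le1]; rewrite /fractional negb_and -!leNgt.
by case/orP=> ?; [left | right]; apply/eqP; rewrite eq_le; apply/andP.
Qed.

Lemma card_fractional_neq1 (R : archiRealDomainType) (T : finType) (g : T -> R) :
  (forall t, 0 <= g t <= 1) -> \sum_t g t \is a Num.int ->
  #|[set t | fractional (g t)]| != 1%N.
Proof.
move=> g01 sum_int; apply/negP => /cards1P[t0 frac_eq].
have frac_t0 : fractional (g t0) by move: (set11 t0); rewrite -frac_eq inE.
have rest_int : \sum_(t | t != t0) g t \is a Num.int.
  apply: rpred_sum => t t_neq.
  have : t \notin [set t | fractional (g t)] by rewrite frac_eq in_set1.
  rewrite inE => /(unit_interval_nonfractional (g01 t)).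
  by case=> ->; rewrite ?rpred0 ?rpred1.
have := int_not_fractional (rpredB sum_int rest_int).
by rewrite (bigD1 t0) //= addrK frac_t0.
Qed.

Lemma double_card_le_sum (T : finType) (A : {pred T}) (f : T -> nat) :
  (forall t, t \in A -> f t != 1%N) ->
  (2 * #|[set t in A | f t != 0%N]| <= \sum_(t in A) f t)%N.
Proof.
move=> f_neq1; rewrite -sum1_card big_distrr /= big_mkcond [leqRHS]big_mkcond /=.
apply: leq_sum => t _; rewrite inE.
by case: (boolP (t \in A)) => //= /f_neq1; case: ifP; lia.
Qed.

Section PairSets.
Variables (I J : finType).

Definition row_set (F : {set I * J}) (i : I) := [set j | (i, j) \in F].
Definition col_set (F : {set I * J}) (j : J) := [set i | (i, j) \in F].

Lemma card_rows (F : {set I * J}) : #|F| = (\sum_i #|row_set F i|)%N.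
Proof.
under [RHS]eq_bigr do rewrite -sum1_card big_mkcond.
rewrite pair_big -sum1_card big_mkcond; apply: eq_bigr => -[i j] _.
by rewrite inE.
Qed.

Lemma card_cols (F : {set I * J}) : #|F| = (\sum_j #|col_set F j|)%N.
Proof.
under [RHS]eq_bigr do rewrite -sum1_card big_mkcond.
rewrite exchange_big pair_big -sum1_card big_mkcond; apply: eq_bigr => -[i j] _.
by rewrite inE.
Qed.

Lemma card_lines_lt (F : {set I * J}) (C : {set J}) (p0 : I * J) :
  p0 \in F -> p0.2 \notin C ->
  (forall i, #|row_set F i| != 1%N) ->
  (forall j, j \in C -> #|col_set F j| != 1%N) ->
  (#|[set i | #|row_set F i| != 0%N]| + #|[set j in C | #|col_set F j| != 0%N]|
     < #|F|)%N.
Proof.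
move=> p0F p0C row_neq1 col_neq1.
have rows_le : (2 * #|[set i | #|row_set F i| != 0%N]| <= #|F|)%N.
  by rewrite card_rows; exact: (double_card_le_sum (A := predT)).
have cols_lt : (2 * #|[set j in C | #|col_set F j| != 0%N]| < #|F|)%N.
  rewrite card_cols (bigID [in C]) /= -addn1; apply: leq_add.
    exact: double_card_le_sum.
  rewrite (bigD1 p0.2) //= -[1%N]addn0 leq_add //.
  by rewrite card_gt0; apply/set0Pn; exists p0.1; rewrite inE -surjective_pairing.
lia.
Qed.

End PairSets.

Lemma sum_delta (R : pzRingType) (T : finType) (a : T) (G : T -> R) :
  \sum_t (t == a)%:R * G t = G a.
Proof.
rewrite (bigD1 a) //= eqxx mul1r big1 ?addr0 // => t /negbTE ->.
by rewrite mul0r.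
Qed.

Lemma sum_pair_fst_delta (R : pzRingType) (I J : finType) (i : I) (x : I * J -> R) :
  \sum_p (p.1 == i)%:R * x p = \sum_j x (i, j).
Proof.
under [RHS]eq_bigr do rewrite -(sum_delta i (fun i' => x (i', _))).
by rewrite exchange_big pair_big; apply: eq_big => -[].
Qed.

Lemma sum_pair_snd_delta (R : pzRingType) (I J : finType) (j : J) (x : I * J -> R) :
  \sum_p (p.2 == j)%:R * x p = \sum_i x (i, j).
Proof.
under [RHS]eq_bigr do rewrite -(sum_delta j (fun j' => x (_, j'))).
by rewrite pair_big; apply: eq_big => -[].
Qed.

Lemma exists_kernel (R : fieldType) (A B : finType) (P : {pred B})
    (f : B -> A -> R) :
  (#|P| < #|A|)%N ->
  exists2 x : A -> R, exists a, x a != 0 &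
    forall b, b \in P -> \sum_a f b a * x a = 0.
Proof.
move=> P_lt_A.
pose M := \matrix_(i < #|A|, j < #|P|) f (enum_val j) (enum_val i).
have /rowV0Pn[v v_ker v_neq0] : kermx M != 0.
  rewrite -mxrank_eq0 mxrank_ker -lt0n subn_gt0.
  exact: leq_ltn_trans (rank_leq_col M) P_lt_A.
have vM0 : v *m M = 0 by apply/sub_kermxP.
exists (fun a => v 0 (enum_rank a)).
  have /existsP[j vj_neq0] : [exists j, v 0 j != 0].
    apply: contraNT v_neq0 => /existsPn vj0.
    by apply/eqP/rowP => j; rewrite mxE; exact/eqP/negPn.
  by exists (enum_val j); rewrite enum_valK.
move=> b bP; have := congr1 (fun m : 'M_(1, #|P|) => m 0 (enum_rank_in bP b)) vM0.
rewrite !mxE => vMb0; rewrite -[RHS]vMb0.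
rewrite [LHS](reindex (enum_val : 'I_#|A| -> A)) /=; last first.
  exact: onW_bij (enum_val_bij A).
by apply: eq_bigr => i _; rewrite !mxE enum_valK enum_rankK_in // mulrC.
Qed.

Lemma exists_kernel_on (R : fieldType) (A B : finType) (Q : {pred A})
    (P : {pred B}) (f : B -> A -> R) :
  (#|P| < #|Q|)%N ->
  exists x : A -> R, [/\ exists a, x a != 0, forall a, a \notin Q -> x a = 0
    & forall b, b \in P -> \sum_a f b a * x a = 0].
Proof.
move=> P_lt_Q.
pose P' : {pred B + A} :=
  fun e => match e with inl b => b \in P | inr a => a \notin Q end.
pose f' (e : B + A) (a : A) : R :=
  match e with inl b => f b a | inr a' => (a == a')%:R end.
have P'_lt_A : (#|P'| < #|A|)%N.
  have -> : #|P'| = (#|P| + #|[predC Q]|)%N by rewrite -!sum1_card big_sumType.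
  by rewrite -(cardC Q) ltn_add2r.
have [x x_neq0 x_ker] := exists_kernel f' P'_lt_A.
exists x; split=> // [a aQ | b bP]; last exact: (x_ker (inl b)).
by have := x_ker (inr a) aQ; rewrite /= sum_delta.
Qed.

Section BalancedDirections.
Variables (R : fieldType) (I J : finType).

Definition balanced (F : {set I * J}) (C : {set J}) (d : I -> J -> R) :=
  [/\ forall i j, (i, j) \notin F -> d i j = 0,
      forall i, \sum_j d i j = 0,
      forall j, j \in C -> \sum_i d i j = 0
    & exists i j, d i j != 0].

Lemma balancedN (F : {set I * J}) (C : {set J}) (d : I -> J -> R) :
  balanced F C d -> balanced F C (fun i j => - d i j).
Proof.
case=> d_supp d_rows d_cols [i [j dij_neq0]]; split.
- by move=> i' j' /d_supp ->; rewrite oppr0.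
- by move=> i'; rewrite sumrN d_rows oppr0.
- by move=> j' /d_cols; rewrite sumrN => ->; rewrite oppr0.
- by exists i, j; rewrite oppr_eq0.
Qed.

Lemma exists_balanced_free_column (F : {set I * J}) (C : {set J})
    (p0 : I * J) :
  p0 \in F -> p0.2 \notin C ->
  (forall i, #|row_set F i| != 1%N) ->
  (forall j, j \in C -> #|col_set F j| != 1%N) ->
  exists d, balanced F C d.
Proof.
move=> p0F p0C row_neq1 col_neq1.
pose P : {pred I + J} := fun e => match e with
  | inl i => #|row_set F i| != 0%N
  | inr j => (j \in C) && (#|col_set F j| != 0%N) end.
pose f (e : I + J) (p : I * J) : R :=
  match e with inl i => (p.1 == i)%:R | inr j => (p.2 == j)%:R end.
(* Equations only for the lines meeting F: the other line sums vanish anyway. *)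
have P_lt_F : (#|P| < #|F|)%N.
  suff -> : #|P| = (#|[set i | #|row_set F i| != 0%N]|
                    + #|[set j in C | #|col_set F j| != 0%N]|)%N.
    exact: card_lines_lt p0F p0C row_neq1 col_neq1.
  rewrite -!sum1_card big_sumType.
  by congr (_ + _)%N; apply: eq_bigl => ?; rewrite inE.
have [x [[[i j] x_neq0] x_supp x_ker]] := exists_kernel_on f P_lt_F.
exists (fun i j => x (i, j)); split=> [i' j' /x_supp // | i' | j' j'C |].
- have [row0 | row_neq0] := eqVneq #|row_set F i'| 0%N.
    apply: big1 => j' _; apply: x_supp.
    by have := card0_eq row0 j'; rewrite !inE => ->.
  by have := x_ker (inl i') row_neq0; rewrite sum_pair_fst_delta.
- have [col0 | col_neq0] := eqVneq #|col_set F j'| 0%N.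
    apply: big1 => i' _; apply: x_supp.
    by have := card0_eq col0 i'; rewrite !inE => ->.
  have inP : inr j' \in P by rewrite unfold_in /= j'C.
  by have := x_ker _ inP; rewrite sum_pair_snd_delta.
- by exists i, j.
Qed.

Lemma exists_balanced (F : {set I * J}) (C : {set J}) :
  F != set0 ->
  (forall i, #|row_set F i| != 1%N) ->
  (forall j, j \in C -> #|col_set F j| != 1%N) ->
  exists d, balanced F C d.
Proof.
move=> /set0Pn[p0 p0F] row_neq1 col_neq1.
have [/exists_inP[p pF pC] | /exists_inPn F_in_C] :=
  boolP [exists p in F, p.2 \notin C].
  exact: exists_balanced_free_column pF pC row_neq1 col_neq1.
have [d [d_supp d_rows d_cols d_neq0]] : exists d, balanced F (C :\ p0.2) d.
  apply: (exists_balanced_free_column p0F) => //; first by rewrite !inE eqxx.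
  by move=> j /setD1P[_]; exact: col_neq1.
exists d; split=> // j jC.
have [-> | j_neq] := eqVneq j p0.2; last by apply: d_cols; rewrite !inE j_neq.
(* The dropped column equation follows from the row equations. *)
rewrite -[RHS](_ : \sum_j' \sum_i d i j' = 0); last first.
  by rewrite exchange_big; exact: big1.
rewrite (bigD1 p0.2) //= [X in _ = _ + X]big1 ?addr0 // => j' j'_neq.
have [j'C | j'_notC] := boolP (j' \in C); first by apply: d_cols; rewrite !inE j'_neq.
by apply: big1 => i _; apply: d_supp; apply: contra j'_notC => /F_in_C /negPn.
Qed.

End BalancedDirections.

Section Rounding.
Variables (R : realType) (n : nat) (V : finType) (alpha : V) (k : int).
Implicit Types (c z d : 'I_n -> V -> R).

Definition lin_obj c z := \sum_(i < n) \sum_(v : V) c i v * z i v.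
Definition frac_cells z : {set 'I_n * V} := [set p | fractional (z p.1 p.2)].
Definition int_cols z : {set V} := [set v | \sum_i z i v \is a Num.int].
Definition defect z := (#|frac_cells z| + #|~: int_cols z|)%N.

Lemma lin_objN c d : lin_obj c (fun i v => - d i v) = - lin_obj c d.
Proof.
rewrite /lin_obj -sumrN; apply: eq_bigr => i _.
by rewrite -sumrN; apply: eq_bigr => v _; rewrite mulrN.
Qed.

Lemma exists_balanced_frac z :
  lp_feasible alpha k z -> frac_cells z != set0 ->
  exists d, balanced (frac_cells z) (int_cols z) d.
Proof.
case=> _ _ z_rows z01 frac_neq0; apply: exists_balanced => // [i | v].
  have -> : row_set (frac_cells z) i = [set v | fractional (z i v)].
    by apply/setP => v; rewrite !inE.
  by apply: card_fractional_neq1 => //; rewrite z_rows rpred1.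
rewrite inE => col_int.
have -> : col_set (frac_cells z) v = [set i | fractional (z i v)].
  by apply/setP => i; rewrite !inE.
exact: card_fractional_neq1.
Qed.

Section Shift.
Variables (z d : 'I_n -> V -> R).
Hypotheses (z_feas : lp_feasible alpha k z)
  (d_bal : balanced (frac_cells z) (int_cols z) d).

Definition shift (t : R) i v := z i v + t * d i v.

Definition blocking (e : 'I_n * V + V) :=
  match e with
  | inl p => d p.1 p.2 != 0
  | inr v => (v \notin int_cols z) && (0 < \sum_i d i v)
  end.

(* The step at which the cell reaches 0 or 1, or the column sum its ceiling. *)
Definition step_length (e : 'I_n * V + V) : R :=
  match e with
  | inl (i, v) => if 0 < d i v then (1 - z i v) / d i v else z i v / - d i v
  | inr v => ((Num.ceil (\sum_i z i v))%:~R - \sum_i z i v) / \sum_i d i v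
  end.

Lemma fractional_of_direction i v : d i v != 0 -> fractional (z i v).
Proof.
case: d_bal => d_supp _ _ _ dv_neq0.
by apply: contraR dv_neq0 => not_frac; rewrite d_supp ?inE.
Qed.

Lemma step_length_gt0 e : blocking e -> 0 < step_length e.
Proof.
case: e => [[i v] /= dv_neq0 | v /andP[v_notint D_gt0]].
  have /andP[zv_gt0 zv_lt1] := fractional_of_direction dv_neq0.
  case: ifP => [dv_gt0 | /negbT]; first by rewrite divr_gt0 // subr_gt0.
  by rewrite -leNgt => dv_le0; rewrite divr_gt0 // oppr_gt0 lt_neqAle dv_neq0.
rewrite divr_gt0 // subr_gt0 lt_neqAle ceil_ge andbT.
by apply: contra v_notint => /eqP s_eq; rewrite inE s_eq intr_int.
Qed.

Lemma colsum_shift t v :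
  \sum_i shift t i v = \sum_i z i v + t * \sum_i d i v.
Proof. by rewrite big_split /= mulr_sumr. Qed.

Lemma int_cols_shift t : int_cols z \subset int_cols (shift t).
Proof.
case: d_bal => _ _ d_cols _; apply/subsetP => v v_int.
by rewrite inE colsum_shift d_cols // mulr0 addr0; rewrite inE in v_int.
Qed.

Lemma frac_cells_shift t : frac_cells (shift t) \subset frac_cells z.
Proof.
case: d_bal => d_supp _ _ _; apply/subsetP => -[i v]; apply: contraTT => p_notfrac.
by rewrite !inE /shift d_supp // mulr0 addr0; rewrite inE in p_notfrac.
Qed.

Section AdmissibleStep.
Variable t : R.
Hypotheses (t_ge0 : 0 <= t) (t_le : forall e, blocking e -> t <= step_length e).

Lemma shift_in01 i v : 0 <= shift t i v <= 1.
Proof.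
case: z_feas => _ _ _ z01; have /andP[zv_ge0 zv_le1] := z01 i v; rewrite /shift.
have [dv_lt0 | dv_gt0 | ->] := ltgtP (d i v) 0; last by rewrite mulr0 addr0 zv_ge0.
- have := @t_le (inl (i, v)) (ltr0_neq0 dv_lt0).
  rewrite /= ltNge (ltW dv_lt0) /= ler_pdivlMr ?oppr_gt0 // mulrN.
  have := mulr_ge0_le0 t_ge0 (ltW dv_lt0).
  by move: (t * d i v) => u u_le0 u_ge; apply/andP; split; lra.
- have := @t_le (inl (i, v)) (lt0r_neq0 dv_gt0).
  rewrite /= dv_gt0 ler_pdivlMr //.
  have := mulr_ge0 t_ge0 (ltW dv_gt0).
  by move: (t * d i v) => u u_ge0 u_le; apply/andP; split; lra.
Qed.

Lemma shift_feasible : lp_feasible alpha k (shift t).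
Proof.
case: d_bal => _ d_rows d_cols _; case: z_feas => z_cols z_alpha z_rows _.
have int_col_fixed v : v \in int_cols z -> \sum_i shift t i v = \sum_i z i v.
  by move=> v_int; rewrite colsum_shift d_cols // mulr0 addr0.
split=> [v v_neq | | i | i v]; last exact: shift_in01.
- have [v_int | v_notint] := boolP (v \in int_cols z).
    by rewrite int_col_fixed // z_cols.
  rewrite colsum_shift; have [D_gt0 | D_le0] := ltrP 0 (\sum_i d i v).
    have := @t_le (inr v); rewrite /= v_notint D_gt0 /= => /(_ isT).
    rewrite ler_pdivlMr // lerBrDl => /le_trans; apply.
    by rewrite ler_int ceil_le_int z_cols.
  by apply: le_trans (z_cols v v_neq); rewrite gerDl mulr_ge0_le0.
- by rewrite int_col_fixed // inE z_alpha intr_int.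
- by rewrite big_split /= -mulr_sumr d_rows mulr0 addr0 z_rows.
Qed.

End AdmissibleStep.

Lemma defect_shift_lt e : blocking e -> (defect (shift (step_length e)) < defect z)%N.
Proof.
move=> e_blk; rewrite /defect.
have frac_le := subset_leq_card (frac_cells_shift (step_length e)).
have nonint_le : (#|~: int_cols (shift (step_length e))| <= #|~: int_cols z|)%N.
  by apply: subset_leq_card; rewrite setCS int_cols_shift.
case: e e_blk frac_le nonint_le => [[i v] dv_neq0 | v /andP[v_notint D_gt0]] ? ?.
- suff : (#|frac_cells (shift (step_length (inl (i, v))))| < #|frac_cells z|)%N by lia.
  apply: proper_card; apply/properP; split; first exact: frac_cells_shift.
  exists (i, v); first by rewrite inE; exact: fractional_of_direction.
  rewrite inE /shift /fractional /step_length.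
  case: ifP => [dv_gt0 | _].
    have -> : (1 - z i v) / d i v * d i v = 1 - z i v by rewrite divfK.
    by rewrite addrC subrK ltxx andbF.
  have -> : z i v / - d i v * d i v = - z i v.
    by rewrite invrN mulrN mulNr divfK.
  by rewrite subrr ltxx.
- suff : (#|~: int_cols (shift (step_length (inr v)))| < #|~: int_cols z|)%N by lia.
  apply: proper_card; apply/properP; split; first by rewrite setCS int_cols_shift.
  exists v; first by rewrite inE.
  by rewrite !inE negbK colsum_shift divfK ?gt_eqF // addrC subrK intr_int.
Qed.

Lemma lin_obj_shift c t : lin_obj c (shift t) = lin_obj c z + t * lin_obj c d.
Proof.
rewrite /lin_obj mulr_sumr -big_split; apply: eq_bigr => i _.
by rewrite mulr_sumr -big_split; apply: eq_bigr => v _; rewrite mulrDr mulrCA.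
Qed.

End Shift.

Lemma improving_step c z :
  lp_feasible alpha k z -> frac_cells z != set0 ->
  exists z', [/\ lp_feasible alpha k z', lin_obj c z <= lin_obj c z'
                & (defect z' < defect z)%N].
Proof.
move=> z_feas frac_neq0.
have [d [d_bal d_obj]] :
    exists d, balanced (frac_cells z) (int_cols z) d /\ 0 <= lin_obj c d.
  have [d d_bal] := exists_balanced_frac z_feas frac_neq0.
  have [obj_ge0 | obj_lt0] := lerP 0 (lin_obj c d); first by exists d.
  exists (fun i v => - d i v); split; first exact: balancedN.
  by rewrite lin_objN oppr_ge0 ltW.
have [_ _ _ [i [v dv_neq0]]] := d_bal.
have [e e_blk e_min] :=
  @arg_minP _ R _ (inl (i, v)) (blocking z d) (step_length z d) dv_neq0.
have step_gt0 := step_length_gt0 d_bal e_blk.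
exists (shift z d (step_length z d e)); split.
- exact: shift_feasible (ltW step_gt0) e_min.
- by rewrite lin_obj_shift lerDl mulr_ge0 // ltW.
- exact: defect_shift_lt.
Qed.

Lemma round_to_integral c z :
  lp_feasible alpha k z ->
  exists z', [/\ lp_feasible alpha k z', integral_sol z' & lin_obj c z <= lin_obj c z'].
Proof.
have [m] := ubnP (defect z); elim: m z => // m IH z /ltnSE defect_le z_feas.
have [frac0 | frac_neq0] := eqVneq (frac_cells z) set0.
  exists z; split=> // i v; case: z_feas => _ _ _ z01.
  have : (i, v) \notin frac_cells z by rewrite frac0 inE.
  by rewrite inE; exact: unit_interval_nonfractional (z01 i v).
have [z1 [z1_feas obj_le1 defect_lt]] := improving_step c z_feas frac_neq0.
have [z2 [z2_feas z2_int obj_le2]] := IH z1 (leq_trans defect_lt defect_le) z1_feas.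
by exists z2; split=> //; exact: le_trans obj_le2.
Qed.

End Rounding.

Lemma exists_integral_argmax (R : realDomainType) (I J : finType)
    (P : (I -> J -> R) -> Prop) (f : (I -> J -> R) -> R) :
  (forall z, P z -> exists z',
     [/\ P z', forall i j, z' i j = 0 \/ z' i j = 1 & f z <= f z']) ->
  (exists z, P z) ->
  exists z, (forall i j, z i j = 0 \/ z i j = 1) /\
            P z /\ forall z', P z' -> f z' <= f z.
Proof.
move=> rounding [z0 z0P].
pose of_bits (b : {ffun I * J -> bool}) i j : R := (b (i, j))%:R.
have of_bitsK z : (forall i j, z i j = 0 \/ z i j = 1) ->
    of_bits [ffun p => z p.1 p.2 == 1] = z.
  move=> z01; apply: funext => i; apply: funext => j; rewrite /of_bits ffunE /=.
  by case: (z01 i j) => ->; rewrite ?eqxx // eq_sym oner_eq0.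
pose Pb (b : {ffun I * J -> bool}) := `[< P (of_bits b) >].
have [z1 [z1P z1_01 _]] := rounding z0 z0P.
have Pb1 : Pb [ffun p => z1 p.1 p.2 == 1] by apply/asboolP; rewrite of_bitsK.
have [b bP b_max] := @arg_maxP _ R _ _ Pb (fun b => f (of_bits b)) Pb1.
exists (of_bits b); split.
  by move=> i j; rewrite /of_bits; case: (b (i, j)); [right | left].
split=> [|z zP]; first exact/asboolP.
have [z' [z'P z'_01 fz_le]] := rounding z zP.
apply: le_trans fz_le _; rewrite -(of_bitsK z' z'_01).
by apply: b_max; apply/asboolP; rewrite of_bitsK.
Qed.

Theorem theorem11 (R : realType) (n : nat) (V : finType)
  (psi : 'I_n -> V -> R) (w : V -> V -> R) (alpha : V) (k : int) :
  (0 < n)%N ->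
  (exists z : 'I_n -> V -> R, lp_feasible alpha k z) ->
  exists z : 'I_n -> V -> R,
    integral_sol z /\ lp_optimal psi w alpha k z.
Proof.
move=> _; apply: exists_integral_argmax => z.
exact: (round_to_integral (fun i v => psi i v + w alpha v)).
Qed.
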